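(* Let $\hbar\in\mathbb C\setminus\{0\}$, $p=2\hbar$, $0\le\ell\le n$. For generic $z=(z_1,\dots,z_n)$, the functions $W_M(\cdot\,;z)$, $M\subset\{1,\dots,n\}$, $\#M=\ell$, form a basis of $\overline{\mathcal F}_q^{\wedge\ell}(z)$.
   Context: A point $z$ is generic if $z_k-z_m+\hbar\notin p\mathbb Z$ for $k\ne m$ (equivalently, since $p=2\hbar$, $\prod_{k<m}(e^{2\pi iz_k/p}+e^{2\pi iz_m/p})\ne0$). For $f(t_1,\dots,t_\ell)$, $\mathrm{Asym}\,f=\sum_{\sigma\in S_\ell}\mathrm{sgn}(\sigma)f(t_{\sigma_1},\dots,t_{\sigma_\ell})$. With $E(t)=e^{2\pi it/p}$ and $M=\{m_1<\dots<m_\ell\}$: $G_M(t)=\prod_{a=1}^\ell\Big(\frac{1}{E(t_a-z_{m_a})-1}\prod_{1\le j<m_a}\frac{E(t_a-z_j)+1}{E(t_a-z_j)-1}\Big)$, $W_M=\mathrm{Asym}\,G_M$. $\overline{\mathcal F}_q^{\wedge\ell}(z)$ is the space of functions $F(t_1,\dots,t_\ell)$ such that $F\prod_{m=1}^n\prod_{a=1}^\ell(1-E(t_a-z_m))$ is an antisymmetric polynomial in $E(t_1),\dots,E(t_\ell)$ of degree less than $n$ in each variable. *)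

From HB Require Import structures.
From mathcomp Require Import all_boot all_order all_algebra all_fingroup.
From mathcomp Require Import complex.
From mathcomp Require Import reals sequences exp trigo.
Set Implicit Arguments. Unset Strict Implicit. Unset Printing Implicit Defensive.
Import Order.TTheory GRing.Theory Num.Theory.
Local Open Scope ring_scope.
Local Open Scope complex_scope.

Section Defs.
Variable R : realType.
Local Notation C := R[i].

Definition expC (w : C) : C :=
  let: a +i* b := w in (expR a)%:C * (cos b +i* sin b).

Definition Efun (p t : C) : C := expC ((2 * pi)%:C * 'i * t / p).

Definition generic_pt (n : nat) (hbar p : C) (z : 'I_n -> C) : Prop :=
  forall k m : 'I_n, k != m -> forall j : int, z k - z m + hbar != j%:~R * p.

Definition Asym (l : nat) (f : ('I_l -> C) -> C) : ('I_l -> C) -> C :=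
  fun t => \sum_(s : 'S_l) (-1) ^+ odd_perm s * f (fun a => t (s a)).

(* z_k for a natural index k (0-based); only used with k < n *)
Definition zat (n : nat) (z : 'I_n -> C) (k : nat) : C :=
  match (insub k : option 'I_n) with Some j => z j | None => 0 end.

Definition melt (n : nat) (M : {set 'I_n}) (a : nat) : nat :=
  nth 0%N (sort leq [seq val i | i <- enum M]) a.

(* G_M(t) (indices 0-based: the condition 1 <= j < m_a becomes j < m_a) *)
Definition GM (n l : nat) (p : C) (z : 'I_n -> C) (M : {set 'I_n})
    (t : 'I_l -> C) : C :=
  \prod_(a < l)
    ((Efun p (t a - zat z (melt M a)) - 1)^-1 *
     \prod_(j < n | (val j < melt M a)%N)
        ((Efun p (t a - z j) + 1) / (Efun p (t a - z j) - 1))).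

Definition WM (n l : nat) (p : C) (z : 'I_n -> C) (M : {set 'I_n}) :
  ('I_l -> C) -> C := Asym (GM p z M).

Definition polyev (n l : nat) (c : {ffun 'I_l -> 'I_n} -> C) (x : 'I_l -> C) : C :=
  \sum_(e : {ffun 'I_l -> 'I_n}) c e * \prod_(a < l) x a ^+ val (e a).

Definition antisym_fun (l : nat) (P : ('I_l -> C) -> C) : Prop :=
  forall (s : 'S_l) (x : 'I_l -> C),
    P (fun a => x (s a)) = (-1) ^+ odd_perm s * P x.

Definition regular_pt (n l : nat) (p : C) (z : 'I_n -> C) (t : 'I_l -> C) : Prop :=
  forall (a : 'I_l) (m : 'I_n), Efun p (t a - z m) != 1.

(* F \in \bar F_q^{\wedge l}(z): F * prod_{m,a} (1 - E(t_a - z_m)) is an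
   antisymmetric polynomial in E(t_1),...,E(t_l) of degree < n in each
   variable (identity of meromorphic functions, i.e. off the poles). *)
Definition Fspace (n l : nat) (p : C) (z : 'I_n -> C) (F : ('I_l -> C) -> C) : Prop :=
  exists c : {ffun 'I_l -> 'I_n} -> C,
    antisym_fun (polyev c) /\
    forall t, regular_pt p z t ->
      F t * \prod_(m < n) \prod_(a < l) (1 - Efun p (t a - z m)) =
      polyev c (fun a => Efun p (t a)).

End Defs.

(* Write w_j = E(-z_j) and x_a = E(t_a), so that E(t_a - z_j) = w_j x_a.
   Clearing the denominators of G_M turns its a-th factor into q_(m_a)(x_a),
   where q_m = - prod_(j<m) (-(1 + w_j X)) * prod_(j>m) (1 - w_j X) has degree
   < n, so W_M * prod_(m,a) (1 - E(t_a - z_m)) is the alternant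
   det [q_(m_a)(x_b)]_(a,b).  Genericity gives w_j + w_k <> 0 for j <> k, which
   makes q_0, ..., q_(n-1) linearly independent, hence a basis of the
   polynomials of degree < n.  Expanding an antisymmetric polynomial in the
   tensor basis q_(k_1)(x_1) ... q_(k_l)(x_l) and antisymmetrizing writes it as
   a combination of the alternants of the l-subsets M.  These alternants are
   independent: on a grid s^l where the matrix (q_m(s_i)) is invertible, the
   dual tensor coordinates of the alternant of M pick out M alone, and such a
   grid exists away from the poles. *)

From HB Require Import structures.
From mathcomp Require Import all_boot all_order all_algebra all_fingroup.
From mathcomp Require Import complex.
From mathcomp Require Import reals sequences exp trigo.
From mathcomp Require Import ring lra.
Set Implicit Arguments. Unset Strict Implicit. Unset Printing Implicit Defensive.
Import Order.TTheory GRing.Theory Num.Theory.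
Local Open Scope ring_scope.

Section SetEnum.
Variables (n l : nat) (Hln : (l <= n)%N).

(* The default [widen_ord Hln a] is never reached when #|M| = l. *)
Definition enum_nth (M : {set 'I_n}) (a : 'I_l) : 'I_n :=
  nth (widen_ord Hln a) (enum M) a.

Variable M : {set 'I_n}.
Hypothesis HM : #|M| = l.

Lemma enum_nthE x0 a : enum_nth M a = nth x0 (enum M) a.
Proof. by rewrite /enum_nth (set_nth_default x0) // -cardE HM ltn_ord. Qed.

Lemma enum_nth_in a : enum_nth M a \in M.
Proof. by rewrite /enum_nth -mem_enum mem_nth // -cardE HM ltn_ord. Qed.

Lemma enum_nth_inj : injective (enum_nth M).
Proof.
move=> a b; rewrite !(enum_nthE (widen_ord Hln a)) => /eqP.
by rewrite nth_uniq ?enum_uniq -?cardE ?HM ?ltn_ord // => /eqP/val_inj.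
Qed.

Lemma enum_nth_surj x : x \in M -> exists a, enum_nth M a = x.
Proof.
move=> xM; have ix : (index x (enum M) < l)%N by rewrite -HM cardE index_mem mem_enum.
by exists (Ordinal ix); rewrite (enum_nthE x) nth_index // mem_enum.
Qed.

Lemma melt_enum_nth (a : 'I_l) : melt M a = enum_nth M a.
Proof.
have sorted_enum : sorted leq [seq val i | i <- enum M].
  rewrite sorted_map /enum_mem -enumT; apply: sorted_filter; first exact: leq_trans.
  by rewrite -sorted_map val_enum_ord iota_sorted.
rewrite /melt (sorted_sort leq_trans sorted_enum) (nth_map (enum_nth M a)).
  by rewrite -enum_nthE.
by rewrite -cardE HM ltn_ord.
Qed.

End SetEnum.

Section Alternant.
Variables (K : comPzRingType) (T : Type) (n l : nat) (q : 'I_n -> T -> K).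

Definition alternant (k : 'I_l -> 'I_n) (y : 'I_l -> T) : K :=
  \det (\matrix_(a, b) q (k a) (y b)).

Lemma alternantE k y :
  alternant k y = \sum_(s : 'S_l) (-1) ^+ s * \prod_a q (k a) (y (s a)).
Proof.
by apply: eq_bigr => s _; congr (_ * _); apply: eq_bigr => a _; rewrite mxE.
Qed.

Lemma alternant_trE k y :
  alternant k y = \sum_(s : 'S_l) (-1) ^+ s * \prod_a q (k (s a)) (y a).
Proof.
rewrite /alternant -det_tr; apply: eq_bigr => s _; congr (_ * _).
by apply: eq_bigr => a _; rewrite !mxE.
Qed.

Lemma alternant_perm (s : 'S_l) k y :
  alternant k (fun b => y (s b)) = (-1) ^+ s * alternant k y.
Proof.
rewrite /alternant.
have -> : \matrix_(a, b) q (k a) (y (s b)) = col_perm s (\matrix_(a, b) q (k a) (y b)).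
  by apply/matrixP => a b; rewrite !mxE.
by rewrite col_permE det_mulmx det_perm odd_permV mulrC.
Qed.

Lemma alternant_eq0 k y : ~~ injectiveb k -> alternant k y = 0.
Proof.
case/injectivePn => a1 [a2 a12 e].
by rewrite /alternant (determinant_alternate a12) // => b; rewrite !mxE e.
Qed.

Variable Hln : (l <= n)%N.
Local Notation enum_nth := (enum_nth Hln).

Lemma alternant_enum_nth (k : 'I_l -> 'I_n) y : #|k @: 'I_l| = l ->
  alternant k y =
  \det (\matrix_(a, b) (k a == enum_nth (k @: 'I_l) b)%:R) *
  alternant (enum_nth (k @: 'I_l)) y.
Proof.
move=> Hk.
rewrite /alternant -det_mulmx; congr (\det _); apply/matrixP => a c; rewrite !mxE.
have /(enum_nth_surj Hln Hk) [b kb] : k a \in k @: 'I_l by apply: imset_f.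
rewrite (bigD1 b) //= !mxE -kb eqxx mul1r big1 ?addr0 // => b' b'b.
by rewrite !mxE -kb (inj_eq (enum_nth_inj Hk)) eq_sym (negbTE b'b) mul0r.
Qed.

Lemma det_enum_nth_eq (M N : {set 'I_n}) : #|M| = l -> #|N| = l ->
  \det (\matrix_(a, b) (enum_nth M a == enum_nth N b)%:R) = (M == N)%:R :> K.
Proof.
move=> HM HN; have [<-|MN] := eqVneq M N.
  have -> : \matrix_(a, b) (enum_nth M a == enum_nth M b)%:R = 1%:M :> 'M[K]_l.
    by apply/matrixP => a b; rewrite !mxE (inj_eq (enum_nth_inj HM)).
  by rewrite det1.
have /subsetPn [x xM xN] : ~~ (M \subset N).
  by apply: contra MN => sMN; rewrite eqEcard sMN HM HN leqnn.
have [a ax] := enum_nth_surj Hln HM xM.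
rewrite /determinant big1 // => s _; rewrite (bigD1 a) //= mxE ax.
have /negbTE -> : x != enum_nth N (s a).
  by apply: contraNneq xN => ->; apply: enum_nth_in.
by rewrite mul0r mulr0.
Qed.

End Alternant.

Section AlternantFree.
Variables (K : fieldType) (T : Type) (n l : nat) (Hln : (l <= n)%N).
Variables (q : 'I_n -> T -> K) (x : 'I_n -> T).
Let V := \matrix_(m, i) q m (x i).
Hypothesis V_unit : V \in unitmx.

(* The coefficient of the tensor q_(k 1) (y 1) ... q_(k l) (y l) in a
   combination F of such tensors, read off the values of F on the grid x^l. *)
Let coord (k : 'I_l -> 'I_n) (F : ('I_l -> T) -> K) : K :=
  \sum_(i : {ffun 'I_l -> 'I_n}) (\prod_a invmx V (i a) (k a)) * F (fun a => x (i a)).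

Lemma coord_alternant k k' :
  coord k' (alternant q k) = \det (\matrix_(a, b) (k a == k' b)%:R).
Proof.
rewrite -det_tr /coord; under eq_bigr do rewrite alternant_trE mulr_sumr.
rewrite exchange_big; apply: eq_bigr => s _.
under eq_bigr do rewrite mulrCA -big_split /=.
rewrite -mulr_sumr; congr (_ * _).
rewrite -(bigA_distr_bigA (fun a j => invmx V j (k' a) * q (k (s a)) (x j))).
apply: eq_bigr => a _; rewrite !mxE.
have := congr1 (fun A : 'M_n => A (k (s a)) (k' a)) (mulmxV V_unit); rewrite !mxE => <-.
by apply: eq_bigr => j _; rewrite mxE mulrC.
Qed.

Lemma coord_sum (I : finType) (P : pred I) (c : I -> K) (F : I -> ('I_l -> T) -> K) k :
  coord k (fun y => \sum_(j | P j) c j * F j y) = \sum_(j | P j) c j * coord k (F j).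
Proof.
rewrite /coord; under eq_bigr do rewrite mulr_sumr.
rewrite exchange_big; apply: eq_bigr => j _; rewrite mulr_sumr.
by apply: eq_bigr => i _; rewrite mulrCA.
Qed.

Lemma alternant_enum_nth_free (lam : {set 'I_n} -> K) :
  (forall i : {ffun 'I_l -> 'I_n},
     \sum_(M : {set 'I_n} | #|M| == l)
        lam M * alternant q (enum_nth Hln M) (fun a => x (i a)) = 0) ->
  forall N : {set 'I_n}, #|N| = l -> lam N = 0.
Proof.
move=> lam0 N HN.
have : coord (enum_nth Hln N) (fun y =>
    \sum_(M : {set 'I_n} | #|M| == l) lam M * alternant q (enum_nth Hln M) y) = 0.
  by rewrite /coord big1 // => i _; rewrite lam0 mulr0.
rewrite coord_sum (bigD1 N) ?HN //= big1 ?addr0; last first.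
  move=> M /andP[/eqP HM MN].
  by rewrite coord_alternant det_enum_nth_eq // (negbTE MN) mulr0.
by rewrite coord_alternant det_enum_nth_eq // eqxx mulr1.
Qed.

End AlternantFree.

Section AntisymmetricSpan.
Variables (K : fieldType) (T : Type) (n l : nat) (Hln : (l <= n)%N).
Variable q : 'I_n -> T -> K.
Hypothesis K_char0 : has_pchar0 K.
Variables (gam : {ffun 'I_l -> 'I_n} -> K) (P : ('I_l -> T) -> K).
Hypothesis P_expand : forall y, P y = \sum_k gam k * \prod_a q (k a) (y a).
Hypothesis P_antisym : forall (s : 'S_l) y, P (fun a => y (s a)) = (-1) ^+ s * P y.

Lemma antisymmetrize_expansion y : l`!%:R * P y = \sum_k gam k * alternant q k y.
Proof.
transitivity (\sum_(s : 'S_l) (-1) ^+ s * P (fun a => y (s a))).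
  rewrite -card_Sn -sumr_const mulr_suml; apply: eq_bigr => s _.
  by rewrite P_antisym mulrA -signr_addb addbb !mul1r.
under eq_bigr do rewrite P_expand mulr_sumr.
rewrite exchange_big; apply: eq_bigr => k _.
by rewrite alternantE mulr_sumr; apply: eq_bigr => s _; rewrite mulrCA.
Qed.

Lemma antisym_alternant_span : exists lam : {set 'I_n} -> K, forall y,
  P y = \sum_(M : {set 'I_n} | #|M| == l) lam M * alternant q (enum_nth Hln M) y.
Proof.
pose perm_det (k : 'I_l -> 'I_n) :=
  \det (\matrix_(a, b) (k a == enum_nth Hln (k @: 'I_l) b)%:R) : K.
exists (fun M =>
  l`!%:R^-1 * \sum_(k : {ffun 'I_l -> 'I_n} | k @: 'I_l == M) gam k * perm_det k) => y.
have fact_neq0 : l`!%:R != 0 :> K by move/pcharf0P: K_char0 => ->; rewrite -lt0n fact_gt0.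
rewrite -[P y](mulKf fact_neq0) antisymmetrize_expansion.
under [RHS]eq_bigr do rewrite -mulrA.
rewrite -mulr_sumr; congr (_ * _).
rewrite (bigID (fun k : {ffun 'I_l -> 'I_n} => #|k @: 'I_l| == l)) /=.
rewrite [X in _ + X]big1 ?addr0; last first.
  move=> k Hk; rewrite alternant_eq0 ?mulr0 //.
  by apply: contra Hk => /injectiveP k_inj; rewrite card_imset // card_ord.
rewrite (partition_big (fun k : {ffun 'I_l -> 'I_n} => k @: 'I_l) (fun M => #|M| == l)) //=.
apply: eq_bigr => M HM; rewrite mulr_suml.
apply: eq_big => [k|k /andP[/eqP Hk /eqP kM]].
  by case: (k @: 'I_l =P M) => [->|]; rewrite ?HM ?andbF.
by rewrite (alternant_enum_nth q Hln y Hk) /perm_det kM mulrA.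
Qed.

End AntisymmetricSpan.

Section PolynomialBasis.
Variables (K : fieldType) (n : nat) (Q : 'M[K]_n) (q : 'I_n -> K -> K).
Hypothesis qE : forall m y, q m y = \sum_j Q m j * y ^+ j.
Hypothesis Q_unit : Q \in unitmx.

Lemma exp_basisE (j : 'I_n) y : y ^+ j = \sum_m invmx Q j m * q m y.
Proof.
under eq_bigr do rewrite qE mulr_sumr.
rewrite exchange_big /=.
transitivity (\sum_i (invmx Q *m Q) j i * y ^+ i).
  rewrite mulVmx // (bigD1 j) //= mxE eqxx mul1r big1 ?addr0 // => i ij.
  by rewrite mxE eq_sym (negbTE ij) mul0r.
by apply: eq_bigr => i _; rewrite mxE mulr_suml; apply: eq_bigr => m _; rewrite mulrA.
Qed.

Lemma eval_basis_unitmx (x : 'I_n -> K) : injective x ->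
  \matrix_(m, i) q m (x i) \in unitmx.
Proof.
move=> x_inj.
have -> : \matrix_(m, i) q m (x i) = Q *m Vandermonde n (\row_i x i).
  by apply/matrixP => m i; rewrite !mxE qE; apply: eq_bigr => j _; rewrite !mxE.
rewrite unitmx_mul Q_unit unitmxE unitfE det_Vandermonde.
apply/prodf_neq0 => i _; apply/prodf_neq0 => j ij; rewrite !mxE subr_eq0.
by apply: contraTneq ij => /x_inj ->; rewrite ltnn.
Qed.

End PolynomialBasis.

Lemma free_poly_coef_unitmx (K : fieldType) n (P : 'I_n -> {poly K}) :
  (forall m, (size (P m) <= n)%N) ->
  (forall mu : 'I_n -> K, \sum_m mu m *: P m = 0 -> forall m, mu m = 0) ->
  \matrix_(m, j) (P m)`_j \in unitmx.
Proof.
move=> P_size P_free; rewrite unitmxE unitfE; apply/negP => /det0P [v v_neq0 v0].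
have comb0 : \sum_m v 0 m *: P m = 0.
  apply/polyP => j; rewrite coef_sum coef0.
  have [jn|nj] := ltnP j n.
    transitivity ((v *m \matrix_(m, i) (P m)`_i) 0 (Ordinal jn)); last by rewrite v0 mxE.
    by rewrite mxE; apply: eq_bigr => m _; rewrite coefZ mxE.
  by rewrite big1 // => m _; rewrite coefZ nth_default ?mulr0 // (leq_trans (P_size m)).
by move/negP: v_neq0; apply; apply/eqP/rowP => m; rewrite mxE (P_free _ comb0).
Qed.

Section PolyevBasis.
Variables (R : realType) (n l : nat) (Q : 'M[R[i]]_n) (q : 'I_n -> R[i] -> R[i]).
Hypothesis qE : forall m y, q m y = \sum_j Q m j * y ^+ j.

Lemma alternant_polyev (k : 'I_l -> 'I_n) :
  exists c : {ffun 'I_l -> 'I_n} -> R[i], forall y, alternant q k y = polyev c y.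
Proof.
exists (fun e => \sum_(s : 'S_l) (-1) ^+ s * \prod_a Q (k (s a)) (e a)) => y.
rewrite alternant_trE /polyev; under [RHS]eq_bigr do rewrite mulr_suml.
rewrite [RHS]exchange_big; apply: eq_bigr => s _.
under eq_bigr do rewrite qE.
rewrite bigA_distr_bigA mulr_sumr; apply: eq_bigr => e _.
by rewrite -mulrA big_split.
Qed.

Hypothesis Q_unit : Q \in unitmx.

Lemma polyev_basis_expand (c : {ffun 'I_l -> 'I_n} -> R[i]) :
  exists gam : {ffun 'I_l -> 'I_n} -> R[i],
    forall y, polyev c y = \sum_k gam k * \prod_a q (k a) (y a).
Proof.
exists (fun k => \sum_e c e * \prod_a invmx Q (e a) (k a)) => y.
rewrite /polyev; under [RHS]eq_bigr do rewrite mulr_suml.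
rewrite [RHS]exchange_big; apply: eq_bigr => e _.
transitivity (c e * \prod_a \sum_m invmx Q (e a) m * q m (y a)).
  by congr (_ * _); apply: eq_bigr => a _; rewrite (exp_basisE qE Q_unit).
rewrite bigA_distr_bigA mulr_sumr; apply: eq_bigr => k _.
by rewrite big_split mulrA.
Qed.

End PolyevBasis.

Section WeightPolynomials.
Variables (K : fieldType) (n : nat) (w : 'I_n -> K).

(* With u_j = w_j X standing for E(t - z_j), the factor of G_M at m times
   prod_j (1 - u_j) is gpoly m: the factor j = m gives -1, the factors j < m
   give -(u_j + 1) and those j > m keep 1 - u_j. *)
Definition gfactor (m j : 'I_n) : {poly K} :=
  if (j < m)%N then - (w j *: 'X + 1) else 1 - w j *: 'X.

Definition gpoly (m : 'I_n) : {poly K} := - \prod_(j | j != m) gfactor m j.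

Lemma size_gpoly m : (size (gpoly m) <= n)%N.
Proof.
have size_gfactor j : (size (gfactor m j) <= 2)%N.
  have size_wX : (size (w j *: 'X) <= 2)%N.
    by rewrite (leq_trans (size_scale_leq _ _)) ?size_polyX.
  rewrite /gfactor; case: ifP => _; rewrite ?size_polyN;
  by apply: leq_trans (size_polyD _ _) _; rewrite geq_max size_poly1 ?size_polyN size_wX.
rewrite size_polyN; apply: (@leq_trans #|[pred j | j != m]|.+1); last first.
  by rewrite cardC1 card_ord; case: (n) (m) => [[]|].
rewrite -sum1_card; elim/big_rec2: _ => [|j d p _ IH]; first by rewrite size_poly1.
apply: leq_trans (size_polyMleq _ _) _; rewrite -subn1 leq_subLR.
by apply: leq_trans (leq_add (size_gfactor j) IH) _; rewrite !addSn !add0n.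
Qed.

End WeightPolynomials.

Lemma gpoly_lift (K : fieldType) n (w : 'I_n.+1 -> K) (m : 'I_n) :
  gpoly w (lift ord0 m) = - ((w ord0 *: 'X + 1) * gpoly (fun j => w (lift ord0 j)) m).
Proof.
rewrite /gpoly mulrN opprK big_mkcond big_ord_recl /= /gfactor /= mulNr opprK.
congr (_ * _); rewrite [RHS]big_mkcond; apply: eq_bigr => j _.
by rewrite (inj_eq lift_inj) /bump /= !add1n ltnS.
Qed.

Lemma gpoly_free (K : fieldType) n (w : 'I_n -> K) :
  (forall j, w j != 0) -> (forall j k, j != k -> w j + w k != 0) ->
  forall mu : 'I_n -> K, \sum_m mu m *: gpoly w m = 0 -> forall m, mu m = 0.
Proof.
elim: n w => [w _ _ mu _ []//|n IH w w_neq0 w_add_neq0 mu mu0].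
pose x0 := - (w ord0)^-1.
have root_x0 : w ord0 * x0 + 1 = 0 by rewrite /x0 mulrN mulfV ?w_neq0 // addNr.
(* x0 = -1/w_0 is a root of every gpoly w m except m = 0 *)
have mu_ord0 : mu ord0 = 0.
  have := congr1 (horner^~ x0) mu0; rewrite horner_sum hornerC big_ord_recl big1 ?addr0.
    rewrite hornerZ /gpoly hornerN horner_prod mulrN => /eqP; rewrite oppr_eq0 mulf_eq0.
    case/orP => [/eqP //|]; rewrite prodf_seq_eq0 => /hasP [j _ /andP [j0]].
    rewrite /gfactor ltn0 hornerD hornerN hornerZ hornerX hornerC /x0 => /eqP wj.
    have : w j + w ord0 = w ord0 * (1 - w j * - (w ord0)^-1) by field; apply: w_neq0.
    by rewrite wj mulr0 => /eqP; rewrite (negbTE (w_add_neq0 _ _ j0)).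
  move=> j _; rewrite hornerZ gpoly_lift hornerN hornerM hornerD hornerZ hornerX hornerC.
  by rewrite root_x0 mul0r oppr0 mulr0.
have factor_neq0 : w ord0 *: 'X + 1 != 0 :> {poly K}.
  apply: contraTneq isT => /(congr1 (horner^~ 0)).
  by rewrite hornerD hornerZ hornerX hornerC mulr0 add0r horner0 => /eqP; rewrite oner_eq0.
pose w' j := w (lift ord0 j).
have : (w ord0 *: 'X + 1) * \sum_j mu (lift ord0 j) *: gpoly w' j = 0.
  move: mu0; rewrite big_ord_recl mu_ord0 scale0r add0r => mu0.
  rewrite mulr_sumr -[RHS]oppr0 -[in RHS]mu0 -sumrN.
  by apply: eq_bigr => j _; rewrite gpoly_lift -!mul_polyC; ring.
move/eqP; rewrite mulf_eq0 (negbTE factor_neq0) => /eqP mu_lift0.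
have w'_add_neq0 j k : j != k -> w' j + w' k != 0.
  by move=> jk; apply: w_add_neq0; rewrite (inj_eq lift_inj).
have := IH w' (fun j => w_neq0 _) w'_add_neq0 _ mu_lift0.
by move=> mu_lift m; case: (unliftP ord0 m) => [j ->|->].
Qed.

Local Open Scope complex_scope.

Section ComplexExp.
Variable R : realType.
Local Notation C := R[i].

Lemma expC0 : expC (0 : C) = 1.
Proof. by rewrite /expC /= expR0 cos0 sin0 mul1r. Qed.

Lemma expCD (u v : C) : expC (u + v) = expC u * expC v.
Proof.
case: u => a b; case: v => c d; rewrite /expC /= expRD cosD sinD.
by apply/eqP; rewrite eq_complex /=; apply/andP; split; apply/eqP; ring.
Qed.

Lemma expC_neq0 (u : C) : expC u != 0.
Proof.
apply: contraTneq isT => u0.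
by have := expCD u (- u); rewrite subrr expC0 u0 mul0r => /eqP; rewrite oner_eq0.
Qed.

Lemma cosDz2pi (x : R) (k : int) : cos (x + (pi *+ 2) *~ k) = cos x.
Proof.
case: k => k; first by rewrite -pmulrn (periodicn (@cosD2pi R)).
rewrite NegzE mulrNz -pmulrn.
by rewrite -[in RHS](subrK ((pi *+ 2) *+ k.+1) x) (periodicn (@cosD2pi R)).
Qed.

Lemma cos_eq1 (b : R) : cos b = 1 -> exists k : int, b = (pi *+ 2) *~ k.
Proof.
move=> cos_b; have T_gt0 : 0 < pi *+ 2 :> R by rewrite mulrn_wgt0 // pi_gt0.
set T := pi *+ 2 in T_gt0 *; set k := Num.floor (b / T).
have /andP[k_le k_gt] := floor_itv (b / T); rewrite -/k in k_le k_gt.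
set r := b - T *~ k.
have cos_r : cos r = 1 by rewrite -cos_b -(cosDz2pi r k) /r subrK.
have r_ge0 : 0 <= r by rewrite /r subr_ge0 -mulrzr -ler_pdivlMl // mulrC.
have r_ltT : r < T.
  by rewrite /r ltrBlDl -mulrzr; move: k_gt; rewrite ltr_pdivrMr // intrD mulrDl mul1r mulrC.
exists k; suff r0 : r = 0 by move/eqP: r0; rewrite /r subr_eq0 => /eqP.
(* cos is injective on [0, pi], and T - r lies there when r does not *)
have [r_lepi|pi_ltr] := lerP r pi.
  apply: cos_inj; rewrite ?in_itv /= ?r_ge0 ?r_lepi ?lexx ?pi_ge0 //.
  by rewrite cos_r cos0.
have Tr_gt0 : 0 < T - r by rewrite subr_gt0.
have Tr_ltpi : T - r < pi by rewrite /T mulr2n ltrBlDr ltrD2l.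
suff : T - r = 0 by move=> Tr0; move: Tr_gt0; rewrite Tr0 ltxx.
apply: cos_inj; rewrite ?in_itv /= ?(ltW Tr_gt0) ?(ltW Tr_ltpi) ?lexx ?pi_ge0 //.
by rewrite /T addrC cosD2pi cosN cos_r cos0.
Qed.

Lemma expC_eq1 (u : C) : expC u = 1 -> exists k : int, u = ((pi *+ 2) *~ k)%:C * 'i.
Proof.
case: u => a b; rewrite /expC => /eqP; rewrite eq_complex /= => /andP[/eqP re1 /eqP im0].
rewrite !mul0r subr0 addr0 in re1 im0.
have ea_neq0 : expR a != 0 by rewrite gt_eqF // expR_gt0.
have sin_b : sin b = 0 by move/eqP: im0; rewrite mulf_eq0 (negbTE ea_neq0) => /eqP.
have cos_b : cos b = 1.
  have cos_gt0 : 0 < cos b by rewrite -(pmulr_rgt0 _ (expR_gt0 a)) re1 ltr01.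
  by have := sin0cos1 sin_b; rewrite gtr0_norm.
have a0 : a = 0 by apply: expR_inj; rewrite expR0 -re1 cos_b mulr1.
have [k ->] := cos_eq1 cos_b.
by exists k; apply/eqP; rewrite eq_complex /= a0; apply/andP; split; apply/eqP; ring.
Qed.

Lemma EfunD (p t s : C) : Efun p (t + s) = Efun p t * Efun p s.
Proof. by rewrite /Efun -expCD !mulrDr mulrDl. Qed.

Lemma Efun_neq0 (p t : C) : Efun p t != 0.
Proof. exact: expC_neq0. Qed.

Lemma EfunN (p t : C) : Efun p (- t) = (Efun p t)^-1.
Proof.
apply: (mulfI (Efun_neq0 p t)); rewrite -EfunD subrr mulfV ?Efun_neq0 //.
by rewrite /Efun mulr0 mul0r expC0.
Qed.

Lemma Efun_half_period (hbar : C) : hbar != 0 -> Efun (2 * hbar) hbar = -1.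
Proof.
move=> hbar_neq0; rewrite /Efun.
have -> : (2 * pi)%:C * 'i * hbar / (2 * hbar) = 0 +i* (pi : R).
  have -> : (2 * pi)%:C = (2 : C) * pi%:C by rewrite rmorphM /= rmorph_nat.
  have -> : 0 +i* (pi : R) = pi%:C * 'i.
    by apply/eqP; rewrite eq_complex /=; apply/andP; split; apply/eqP; ring.
  by field; rewrite hbar_neq0.
rewrite /expC expR0 cospi sinpi mul1r.
by apply/eqP; rewrite eq_complex /= oppr0 !eqxx.
Qed.

Lemma Efun_eq1 (p x : C) : p != 0 -> Efun p x = 1 -> exists k : int, x = k%:~R * p.
Proof.
move=> p_neq0 /expC_eq1 [k xk]; exists k.
have ci_neq0 : (2 * pi)%:C * 'i != 0 :> C.
  rewrite mulf_neq0 //; last first.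
    by rewrite eq_complex /= oner_eq0 andbF.
  by rewrite eq_complex /= eqxx andbT mulf_neq0 ?pnatr_eq0 // gt_eqF ?pi_gt0.
apply: (mulfI ci_neq0); rewrite -[LHS](divfK p_neq0) xk.
by rewrite -mulrzr rmorphM /= rmorph_int mulr_natl; ring.
Qed.

Lemma Efun_real (p : C) (r : R) : p != 0 ->
  Efun p ((r / (2 * pi))%:C * p * - 'i) = (expR r)%:C.
Proof.
move=> p_neq0; rewrite /Efun; have pi_neq0 : (pi : R) != 0 by rewrite gt_eqF // pi_gt0.
have -> : (2 * pi)%:C * 'i * ((r / (2 * pi))%:C * p * - 'i) / p = r%:C.
  have -> : r%:C = (2 * pi)%:C * (r / (2 * pi))%:C :> C.
    by rewrite -rmorphM /= mulrC divfK // mulf_neq0 // pnatr_eq0.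
  have ii : ('i : C) * 'i = -1 by rewrite -expr2 sqrCi.
  transitivity ((2 * pi)%:C * (r / (2 * pi))%:C * - ('i * 'i) * (p / p) : C).
    by ring.
  by rewrite ii opprK mulr1 divff // mulr1.
rewrite /expC /= cos0 sin0.
by apply/eqP; rewrite eq_complex /= !mulr0 !mulr1 subr0 addr0 !eqxx.
Qed.

End ComplexExp.

Section WeightFunctions.
Variable R : realType.
Local Notation C := R[i].

Lemma generic_add_neq0 (hbar : C) n (z : 'I_n -> C) :
  hbar != 0 -> generic_pt hbar (2 * hbar) z ->
  forall j k, j != k -> Efun (2 * hbar) (- z j) + Efun (2 * hbar) (- z k) != 0.
Proof.
move=> hbar_neq0 gen j k jk; apply: contraTneq isT => sum0.
have p_neq0 : 2 * hbar != 0 by rewrite mulf_neq0 // pnatr_eq0.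
suff /(Efun_eq1 p_neq0) [m zm] : Efun (2 * hbar) (z j - z k + hbar) = 1.
  by move: (gen j k jk m); rewrite zm eqxx.
have -> : Efun (2 * hbar) (z j - z k + hbar) =
    Efun (2 * hbar) (z j) * Efun (2 * hbar) (- z j).
  rewrite !EfunD Efun_half_period // mulrN1 -mulrN; congr (_ * _).
  by apply/eqP; rewrite eq_sym -addr_eq0 sum0.
by rewrite EfunN mulfV ?Efun_neq0.
Qed.

Lemma GM_factorE (p x : C) n (z : 'I_n -> C) (m : 'I_n) :
  (forall j, Efun p (x - z j) != 1) ->
  ((Efun p (x - z m) - 1)^-1 *
     \prod_(j < n | (val j < val m)%N)
        ((Efun p (x - z j) + 1) / (Efun p (x - z j) - 1)))
  * \prod_(j < n) (1 - Efun p (x - z j))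
  = (gpoly (fun j => Efun p (- z j)) m).[Efun p x].
Proof.
move=> x_reg.
have EfunB j : Efun p (x - z j) = Efun p (- z j) * Efun p x by rewrite EfunD mulrC.
have pole_neq0 j : Efun p (x - z j) - 1 != 0 by rewrite subr_eq0 x_reg.
rewrite /gpoly hornerN horner_prod big_mkcond (bigD1 m) //= ltnn mul1r.
rewrite [X in _ * X](bigD1 m) //= mulrACA -big_split /=.
rewrite -[1 - _]opprB mulrN mulVf // mulN1r; congr (- _).
apply: eq_bigr => j jm; rewrite /gfactor; case: ifP => _.
  by rewrite hornerN hornerD hornerZ hornerX hornerC -EfunB; field; rewrite pole_neq0.
by rewrite mul1r hornerD hornerN hornerZ hornerX hornerC -EfunB.
Qed.

Lemma WM_alternant (p : C) n l (Hln : (l <= n)%N) (z : 'I_n -> C)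
    (M : {set 'I_n}) (t : 'I_l -> C) :
  #|M| = l -> regular_pt p z t ->
  WM p z M t * \prod_(m < n) \prod_(a < l) (1 - Efun p (t a - z m)) =
  alternant (fun m y => (gpoly (fun j => Efun p (- z j)) m).[y])
    (enum_nth Hln M) (fun a => Efun p (t a)).
Proof.
move=> HM t_reg; rewrite /WM /Asym alternantE mulr_suml; apply: eq_bigr => s _.
rewrite -mulrA; congr (_ * _).
rewrite exchange_big /= (reindex_inj (@perm_inj _ s)) /= /GM -big_split /=.
apply: eq_bigr => a _; rewrite (melt_enum_nth Hln HM) /zat valK.
by apply: GM_factorE => j; apply: t_reg.
Qed.

Lemma sum_WM_alternant (p : C) n l (Hln : (l <= n)%N) (z : 'I_n -> C)
    (lam : {set 'I_n} -> C) (t : 'I_l -> C) :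
  regular_pt p z t ->
  (\sum_(M : {set 'I_n} | #|M| == l) lam M * WM p z M t) *
    \prod_(m < n) \prod_(a < l) (1 - Efun p (t a - z m)) =
  \sum_(M : {set 'I_n} | #|M| == l) lam M *
    alternant (fun m y => (gpoly (fun j => Efun p (- z j)) m).[y])
      (enum_nth Hln M) (fun a => Efun p (t a)).
Proof.
move=> t_reg; rewrite mulr_suml; apply: eq_bigr => M /eqP HM.
by rewrite -mulrA WM_alternant.
Qed.

Lemma regular_prod_neq0 (p : C) n l (z : 'I_n -> C) (t : 'I_l -> C) :
  regular_pt p z t -> \prod_(m < n) \prod_(a < l) (1 - Efun p (t a - z m)) != 0.
Proof.
move=> t_reg; apply/prodf_neq0 => m _; apply/prodf_neq0 => a _.
by rewrite subr_eq0 eq_sym t_reg.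
Qed.

(* E(tau_i) = exp(r_i) are distinct positive reals, chosen larger than every
   |Re (1 / E(-z_j))|. *)
Lemma regular_grid (p : C) n (z : 'I_n -> C) : p != 0 ->
  exists tau : 'I_n -> C, injective (fun i => Efun p (tau i)) /\
    forall i j, Efun p (tau i - z j) != 1.
Proof.
move=> p_neq0.
pose B : R := \sum_j `|complex.Re ((Efun p (- z j))^-1)|.
pose r (i : 'I_n) : R := B + i%:R.
exists (fun i => (r i / (2 * pi))%:C * p * - 'i); split.
  move=> i j /=; rewrite !Efun_real // => /complexI /expR_inj /addrI /eqP.
  by rewrite eqr_nat => /eqP /val_inj.
move=> i j; rewrite EfunD Efun_real //; apply: contraTneq isT => E1.
have exp_ri : (expR (r i))%:C = (Efun p (- z j))^-1.
  by apply: (mulIf (Efun_neq0 p (- z j))); rewrite E1 mulVf ?Efun_neq0.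
have : expR (r i) <= B.
  have -> : expR (r i) = complex.Re ((Efun p (- z j))^-1) by rewrite -exp_ri.
  apply: le_trans (real_ler_norm _) _; first exact: num_real.
  by rewrite /B (bigD1 j) //= lerDl sumr_ge0.
have := expR_ge1Dx (r i); have : B <= r i by rewrite /r lerDl ler0n.
lra.
Qed.

End WeightFunctions.

Unset Implicit Arguments.

Theorem proposition5p1 (R : realType) (hbar : R[i]) (n l : nat) (z : 'I_n -> R[i]) :
  hbar != 0 -> (l <= n)%N -> generic_pt hbar (2 * hbar) z ->
  (* each W_M lies in the space *)
  (forall M : {set 'I_n}, #|M| = l -> Fspace (2 * hbar) z (@WM R n l (2 * hbar) z M)) /\
  (* linear independence (as functions off the poles) *)
  (forall lam : {set 'I_n} -> R[i],
     (forall t : 'I_l -> R[i], regular_pt (2 * hbar) z t ->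
        \sum_(M : {set 'I_n} | #|M| == l) lam M * WM (2 * hbar) z M t = 0) ->
     forall M : {set 'I_n}, #|M| = l -> lam M = 0) /\
  (* spanning *)
  (forall F : ('I_l -> R[i]) -> R[i], Fspace (2 * hbar) z F ->
     exists lam : {set 'I_n} -> R[i],
       forall t : 'I_l -> R[i], regular_pt (2 * hbar) z t ->
         F t = \sum_(M : {set 'I_n} | #|M| == l) lam M * WM (2 * hbar) z M t).
Proof.
move=> hbar_neq0 Hln gen; set p := 2 * hbar.
have p_neq0 : p != 0 by rewrite mulf_neq0 // pnatr_eq0.
pose w j := Efun p (- z j); pose q m y := (gpoly w m).[y].
pose Q : 'M_n := \matrix_(m, j) (gpoly w m)`_j.
have qE m y : q m y = \sum_j Q m j * y ^+ j.
  by rewrite /q (horner_coef_wide _ (size_gpoly w m)); apply: eq_bigr => j _; rewrite mxE.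
have Q_unit : Q \in unitmx.
  apply: free_poly_coef_unitmx (size_gpoly w) (gpoly_free _ (generic_add_neq0 hbar_neq0 gen)).
  by move=> j; apply: Efun_neq0.
have [tau [tau_inj tau_reg]] := regular_grid z p_neq0.
split; [|split].
- move=> M HM; have [c alt_c] := alternant_polyev qE (enum_nth Hln M).
  exists c; split => [s y|t t_reg]; first by rewrite -!alt_c alternant_perm.
  by rewrite WM_alternant // alt_c.
- move=> lam lam0.
  apply: (alternant_enum_nth_free (Hln := Hln) (eval_basis_unitmx qE Q_unit tau_inj)) => i.
  have i_reg : regular_pt p z (fun a => tau (i a)) by move=> a m; apply: tau_reg.
  by rewrite -(sum_WM_alternant Hln) // lam0 // mul0r.
- move=> F [c [c_antisym F_c]].
  have [gam c_gam] := polyev_basis_expand qE Q_unit c.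
  have [lam c_lam] := antisym_alternant_span Hln (pchar_num _) c_gam c_antisym.
  exists lam => t t_reg; apply: (mulIf (regular_prod_neq0 t_reg)).
  by rewrite F_c // c_lam sum_WM_alternant.
Qed.
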